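(* Suppose $1/n\ll\varepsilon\ll\varepsilon_1\ll\eta_1\ll\tau\ll1$. Let $G$ be a digraph on $n$ vertices with $\delta^0(G)\geq n/2$ and let $A,B,S,T$ be a partition of $V(G)$ satisfying the $ABST$-conditions. Let $L_1,L_2$ be oriented paths of length eight, and for each $i\in\{1,2\}$ let $(X_i,Y_i)\in\{(A,B),(B,A)\}$ be prescribed. Then $G$ contains vertex-disjoint copies $L_1^G,L_2^G$ of $L_1,L_2$ such that each $L_i^G$ is a useful path and is an $X_iY_i$-path.
   Context: Digraphs have no loops and at most one edge in each direction between two vertices; $\delta^0$ is the minimum semidegree; $d^+_X(x)=|N^+(x)\cap X|$, $d^-_X(x)=|N^-(x)\cap X|$, $d^\pm_X(x)\geq c$ means both $\geq c$; $G[A,B]$ is the digraph on $A\cup B$ with edges of $G$ between $A$ and $B$ in either direction. The $ABST$-conditions on a partition $A,B,S,T$ of sizes $a,b,s,t$: $a\leq b$, $s\leq t$; $a,b,s,t\geq\tau n$; $|a-b|,|s-t|\leq\varepsilon_1 n$; $\delta^0(G[A,B])\geq\eta_1 n$; $d^+_{B\cup S}(x),d^-_{A\cup S}(x)\geq\eta_1 n$ for all $x\in S$; $d^+_{A\cup T}(x),d^-_{B\cup T}(x)\geq\eta_1n$ for all $x\in T$; $d^\pm_B(x)\geq b-\varepsilon^{1/3}n$ for all but at most $\varepsilon_1n$ vertices $x\in A$; $d^\pm_A(x)\geq a-\varepsilon^{1/3}n$ for all but at most $\varepsilon_1 n$ vertices $x\in B$; $d^+_{B\cup S}(x)\geq b+s-\varepsilon^{1/3}n$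 and $d^-_{A\cup S}(x)\geq a+s-\varepsilon^{1/3}n$ for all but at most $\varepsilon_1n$ vertices $x\in S$; $d^+_{A\cup T}(x)\geq a+t-\varepsilon^{1/3}n$ and $d^-_{B\cup T}(x)\geq b+t-\varepsilon^{1/3}n$ for all but at most $\varepsilon_1 n$ vertices $x\in T$. A copy of an oriented path is an injective edge- and orientation-preserving map into $G$; it is an $XY$-path if the initial vertex maps into $X$ and the final vertex into $Y$. For a path $x_1\dots x_q$ in $G$, consider the subsequence of its vertices in $A\cup B$; a vertex of this subsequence in $A$ (resp. $B$) whose predecessor in the subsequence is also in $A$ (resp. $B$) is a repeated $A$ (resp. repeated $B$). A path in $G$ is useful if it is an $AB$-path or a $BA$-path, has no repeated $A$s and no repeated $B$s, and contains an odd number of vertices of $S\cup T$. The hierarchy $\alpha\ll\beta$ means $\alpha$ is sufficiently small as a function of $\beta$. *)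

From mathcomp Require Import all_boot.
From Stdlib Require Import Reals.

Set Implicit Arguments.
Unset Strict Implicit.
Unset Printing Implicit Defensive.

Section Digraphs.
Variable V : finType.
Variable E : rel V.

(* No loops.  "At most one edge in each direction" is automatic for a relation. *)
Definition loopless : Prop := forall x : V, ~~ E x x.

Definition dplus (X : {set V}) (x : V) : nat := #|[set y in X | E x y]|.
Definition dminus (X : {set V}) (x : V) : nat := #|[set y in X | E y x]|.

Definition min_semideg_half (n : nat) : Prop :=
  forall x : V, (n <= 2 * dplus setT x)%N /\ (n <= 2 * dminus setT x)%N.

Definition Rn (k : nat) : R := INR k.

(* delta^0(G[A,B]) >= c, for disjoint A, B: every vertex of A has in/out
   degree >= c into B (the only edges of G[A,B] at x in A go to/from B), and
   symmetrically for B. *)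
Definition bip_min_semideg (A B : {set V}) (c : R) : Prop :=
  (forall x, x \in A -> (c <= Rn (dplus B x))%R /\ (c <= Rn (dminus B x))%R) /\
  (forall x, x \in B -> (c <= Rn (dplus A x))%R /\ (c <= Rn (dminus A x))%R).

Definition all_but_at_most (m : R) (X : {set V}) (P : V -> Prop) : Prop :=
  exists Ex : {set V}, Ex \subset X /\ (Rn #|Ex| <= m)%R /\
    forall x, x \in X -> x \notin Ex -> P x.

Definition is_partition4 (A B S T : {set V}) : Prop :=
  A :|: B :|: S :|: T = setT /\
  [&& [disjoint A & B], [disjoint A & S], [disjoint A & T],
      [disjoint B & S], [disjoint B & T] & [disjoint S & T]].

Definition ABST_conditions (A B S T : {set V}) (n : nat)
    (tau eta1 eps1 eps : R) : Prop :=
  let a := #|A| in let b := #|B| in let s := #|S| in let t := #|T| in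
  let e13 := Rpower eps (1 / 3) in
  [/\ is_partition4 A B S T /\
      (a <= b)%N /\ (s <= t)%N,
      (tau * Rn n <= Rn a)%R /\ (tau * Rn n <= Rn b)%R /\
        (tau * Rn n <= Rn s)%R /\ (tau * Rn n <= Rn t)%R,
      (Rabs (Rn a - Rn b) <= eps1 * Rn n)%R /\
        (Rabs (Rn s - Rn t) <= eps1 * Rn n)%R,
      bip_min_semideg A B (eta1 * Rn n) /\
      (forall x, x \in S -> (eta1 * Rn n <= Rn (dplus (B :|: S) x))%R /\
                            (eta1 * Rn n <= Rn (dminus (A :|: S) x))%R) /\
      (forall x, x \in T -> (eta1 * Rn n <= Rn (dplus (A :|: T) x))%R /\
                            (eta1 * Rn n <= Rn (dminus (B :|: T) x))%R) &
      [/\ all_but_at_most (eps1 * Rn n) A (fun x =>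
            (Rn b - e13 * Rn n <= Rn (dplus B x))%R /\
            (Rn b - e13 * Rn n <= Rn (dminus B x))%R),
          all_but_at_most (eps1 * Rn n) B (fun x =>
            (Rn a - e13 * Rn n <= Rn (dplus A x))%R /\
            (Rn a - e13 * Rn n <= Rn (dminus A x))%R),
          all_but_at_most (eps1 * Rn n) S (fun x =>
            (Rn b + Rn s - e13 * Rn n <= Rn (dplus (B :|: S) x))%R /\
            (Rn a + Rn s - e13 * Rn n <= Rn (dminus (A :|: S) x))%R) &
          all_but_at_most (eps1 * Rn n) T (fun x =>
            (Rn a + Rn t - e13 * Rn n <= Rn (dplus (A :|: T) x))%R /\
            (Rn b + Rn t - e13 * Rn n <= Rn (dminus (B :|: T) x))%R)]].

(* An oriented path of length k (k edges, k+1 vertices v_0..v_k) is given by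
   L : k.-tuple bool; the i-th edge is v_i -> v_(i+1) if tnth L i is true and
   v_(i+1) -> v_i otherwise. *)
Definition is_copy (k : nat) (L : k.-tuple bool) (f : 'I_k.+1 -> V) : Prop :=
  injective f /\
  forall i : 'I_k,
    if tnth L i then E (f (widen_ord (leqnSn k) i)) (f (lift ord0 i))
    else E (f (lift ord0 i)) (f (widen_ord (leqnSn k) i)).

Definition path_seq (k : nat) (f : 'I_k.+1 -> V) : seq V :=
  [seq f i | i <- enum 'I_k.+1].

Definition is_XY_path (k : nat) (f : 'I_k.+1 -> V) (X Y : {set V}) : Prop :=
  f ord0 \in X /\ f ord_max \in Y.

(* No repeated A's and no repeated B's: in the subsequence of vertices lying in
   A :|: B, no two consecutive entries are both in A or both in B
   ([sorted r s] states r holds for each consecutive pair of s). *)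
Definition no_repeats (A B : {set V}) (s : seq V) : Prop :=
  sorted (fun x y => ~~ ((x \in A) && (y \in A)) && ~~ ((x \in B) && (y \in B)))
         [seq x <- s | x \in A :|: B].

Definition is_useful (A B S T : {set V}) (k : nat) (f : 'I_k.+1 -> V) : Prop :=
  (is_XY_path f A B \/ is_XY_path f B A) /\
  no_repeats A B (path_seq f) /\
  odd (count (fun x => x \in S :|: T) (path_seq f)).

End Digraphs.

Definition pickXY (V : finType) (ab : bool) (A B : {set V}) : {set V} * {set V} :=
  if ab then (A, B) else (B, A).

From mathcomp Require Import all_boot.
From Stdlib Require Import Reals Lia Lra.
From mathcomp Require Import zify.

Set Implicit Arguments.
Unset Strict Implicit.
Unset Printing Implicit Defensive.

(* Typical vertices of A are joined in both directions to all but [k] vertices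
   of B and vice versa, so a path that starts and ends at typical A- or
   B-vertices extends greedily at both ends by vertices alternating between A
   and B, creating no repeated A or B.  It therefore suffices to find short
   "cores" with an odd number of vertices in S u T.  If the orientation pattern
   has two consecutive edges pointing the same way, a core A -> S -> B or
   B -> T -> A fits there.  An antidirected pattern instead needs a gadget: an
   edge from a typical vertex of S to A u T, or of T to B u S.  Counting
   out-degrees against the minimum semidegree n/2, either every vertex of S
   has an out-neighbour in A u T or every vertex of T has one in B u S, and a
   second count of the same kind yields two disjoint gadgets, one for each
   path; the two paths are then built one after the other. *)

Section OrientedPaths.
Variables (V : finType) (E : rel V).

Definition oriented_edge (b : bool) (x y : V) : bool := if b then E x y else E y x.

(* Same orientation convention as [is_copy]. *)
Fixpoint oriented_path (bs : seq bool) (s : seq V) : bool :=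
  match bs, s with
  | b :: bs', x :: (y :: _) as s' => oriented_edge b x y && oriented_path bs' s'
  | [::], [:: _] => true
  | _, _ => false
  end.

Lemma size_oriented_path bs s : oriented_path bs s -> size s = (size bs).+1.
Proof.
by elim: bs s => [|b bs IH] [|x [|y s]] //= /andP[_ /IH] /= ->.
Qed.

Lemma oriented_path_cat bs1 bs2 s1 x s2 :
  oriented_path bs1 (rcons s1 x) -> oriented_path bs2 (x :: s2) ->
  oriented_path (bs1 ++ bs2) (s1 ++ x :: s2).
Proof.
elim: s1 bs1 => [|y s1 IH] [|b bs1] //=; first by case: s1 IH.
by case: s1 IH => [|z s1] IH /andP[e p1] p2; rewrite /= e (IH _ p1 p2).
Qed.

Lemma oriented_path_rev bs s :
  oriented_path bs s -> oriented_path (rev (map negb bs)) (rev s).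
Proof.
elim: bs s => [|b bs IH] [|x [|y s]] //= /andP[e /IH].
rewrite !rev_cons -!cats1 -catA => p.
apply: oriented_path_cat; first by rewrite -cats1.
by rewrite /= andbT; case: b e.
Qed.

Lemma oriented_path_nth bs s x0 i : oriented_path bs s -> i < size bs ->
  oriented_edge (nth false bs i) (nth x0 s i) (nth x0 s i.+1).
Proof.
elim: bs s i => [|b bs IH] [|x [|y s]] i //= /andP[e p].
by case: i => [|i] //= hi; exact: IH.
Qed.

Lemma copy_of_oriented_path k (L : k.-tuple bool) (s : seq V) x0 :
  uniq s -> oriented_path L s -> is_copy E L (fun i : 'I_k.+1 => nth x0 s i).
Proof.
move=> us ps; have sz := size_oriented_path ps; rewrite size_tuple in sz.
split=> [i j /eqP|i]; first by rewrite nth_uniq ?sz // => /eqP/ord_inj.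
rewrite (tnth_nth false) /= /bump leq0n add1n.
by have := oriented_path_nth x0 ps (i := i); rewrite size_tuple ltn_ord; apply.
Qed.

End OrientedPaths.

Section Counting.
Variable V : finType.

Lemma card_set_seq (s : seq V) : #|[set x in s]| <= size s.
Proof.
have -> : #|[set x in s]| = #|s| by apply: eq_card => x; rewrite inE.
exact: card_size.
Qed.

Lemma exists_notin3 (P X Y Z : {set V}) :
  #|X| + #|Y| + #|Z| < #|P| -> exists y, [/\ y \in P, y \notin X, y \notin Y & y \notin Z].
Proof.
move=> lt_P; have /subsetPn[y yP] : ~~ (P \subset X :|: Y :|: Z).
  apply: contraTN lt_P => /subset_leq_card le_P; rewrite -leqNgt.
  apply: leq_trans le_P _; apply: leq_trans (leq_card_setU _ _).1 _.
  by rewrite leq_add2r (leq_card_setU _ _).1.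
by rewrite !inE !negb_or => /andP[/andP[yX yY] yZ]; exists y.
Qed.

Lemma cardsU_disjoint (X Y : {set V}) :
  (forall v, v \in X -> v \notin Y) -> #|X :|: Y| = #|X| + #|Y|.
Proof.
move=> dXY; apply/eqP; rewrite (leq_card_setU X Y).2 disjoints_subset.
by apply/subsetP => v /dXY; rewrite inE.
Qed.

End Counting.

Section PartitionLabels.
Variables (V : finType) (A B S T : {set V}).

Definition part_label (v : V) : nat :=
  if v \in A then 0 else if v \in B then 1 else if v \in S then 2 else 3.

Hypothesis partABST : is_partition4 A B S T.

Lemma part_labelP v :
  [/\ (v \in A) = (part_label v == 0), (v \in B) = (part_label v == 1),
      (v \in S) = (part_label v == 2) & (v \in T) = (part_label v == 3)].
Proof.
case: partABST => /setP/(_ v) cover /and5P[dAB dAS dAT dBS /andP[dBT dST]].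
have dis (X Y : {set V}) : [disjoint X & Y] -> ~~ ((v \in X) && (v \in Y)).
  by move/disjoint_setI0/setP/(_ v); rewrite !inE => ->.
move: cover (dis _ _ dAB) (dis _ _ dAS) (dis _ _ dAT) (dis _ _ dBS) (dis _ _ dBT)
  (dis _ _ dST); rewrite !inE /part_label.
by case: (v \in A); case: (v \in B); case: (v \in S); case: (v \in T).
Qed.

Lemma part_label_A v : (v \in A) = (part_label v == 0).
Proof. by case: (part_labelP v). Qed.
Lemma part_label_B v : (v \in B) = (part_label v == 1).
Proof. by case: (part_labelP v). Qed.
Lemma part_label_S v : (v \in S) = (part_label v == 2).
Proof. by case: (part_labelP v). Qed.
Lemma part_label_T v : (v \in T) = (part_label v == 3).
Proof. by case: (part_labelP v). Qed.

Lemma part_label_inA v : v \in A -> part_label v = 0.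
Proof. by rewrite part_label_A => /eqP. Qed.
Lemma part_label_inB v : v \in B -> part_label v = 1.
Proof. by rewrite part_label_B => /eqP. Qed.
Lemma part_label_inS v : v \in S -> part_label v = 2.
Proof. by rewrite part_label_S => /eqP. Qed.
Lemma part_label_inT v : v \in T -> part_label v = 3.
Proof. by rewrite part_label_T => /eqP. Qed.

Lemma part_label_lt4 v : part_label v < 4.
Proof. by rewrite /part_label; case: (v \in A); case: (v \in B); case: (v \in S). Qed.

Lemma part_label_AB v : (v \in A :|: B) = (part_label v < 2).
Proof.
rewrite inE part_label_A part_label_B.
by case: (part_label v) (part_label_lt4 v) => [|[|[|[|]]]].
Qed.

Lemma part_label_ST v : (v \in S :|: T) = (2 <= part_label v).
Proof.
rewrite inE part_label_S part_label_T.
by case: (part_label v) (part_label_lt4 v) => [|[|[|[|]]]].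
Qed.

Lemma part_label_BS v : (v \in B :|: S) = (v \notin A :|: T).
Proof.
rewrite !inE part_label_A part_label_B part_label_S part_label_T.
by case: (part_label v) (part_label_lt4 v) => [|[|[|[|]]]].
Qed.

Lemma card_partition4 : #|A| + #|B| + #|S| + #|T| = #|V|.
Proof.
case: partABST => cover _; rewrite -cardsT -cover !cardsU_disjoint // => v;
  rewrite ?inE ?part_label_A ?part_label_B ?part_label_S ?part_label_T;
  by case: (part_label v) => [|[|[|[|]]]].
Qed.

Lemma card_partsU :
  [/\ #|A :|: S| = #|A| + #|S|, #|B :|: S| = #|B| + #|S|,
      #|A :|: T| = #|A| + #|T| & #|B :|: T| = #|B| + #|T|].
Proof.
by split; apply: cardsU_disjoint => v;
  rewrite ?part_label_A ?part_label_B ?part_label_S ?part_label_T => /eqP ->.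
Qed.

(* Usefulness of a path only depends on the word of part labels of its vertices
   (0, 1, 2, 3 for A, B, S, T); [ab] selects the endpoints as in [pickXY]. *)
Definition AB_alternating (i j : nat) : bool :=
  ~~ ((i == 0) && (j == 0)) && ~~ ((i == 1) && (j == 1)).

Definition useful_word (ab : bool) (w : seq nat) : bool :=
  [&& head 4 w == (if ab then 0 else 1), last 4 w == (if ab then 1 else 0),
      sorted AB_alternating [seq i <- w | i < 2] & odd (count (leq 2) w)].

Lemma useful_of_word k (s : seq V) x0 ab :
  size s = k.+1 -> useful_word ab (map part_label s) ->
  is_useful A B S T (fun i : 'I_k.+1 => nth x0 s i) /\
  is_XY_path (fun i : 'I_k.+1 => nth x0 s i) (pickXY ab A B).1 (pickXY ab A B).2.
Proof.
move=> sz /and4P[hd lt alt odd_ST].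
have ps : path_seq (fun i : 'I_k.+1 => nth x0 s i) = s.
  by rewrite /path_seq -[RHS](mkseq_nth x0) sz /mkseq -val_enum_ord -map_comp.
have XY : is_XY_path (fun i : 'I_k.+1 => nth x0 s i) (pickXY ab A B).1 (pickXY ab A B).2.
  rewrite -nth0 -nth_last size_map sz /= !(nth_map x0) ?sz // in hd lt.
  move: hd lt; case: ab => /eqP hd /eqP lt;
    by rewrite /is_XY_path /pickXY /= part_label_A part_label_B hd lt.
split=> //; split; first by case: ab XY {hd lt} => XY; [left | right].
rewrite /no_repeats ps; split.
  rewrite (eq_filter (a2 := preim part_label (leq^~ 1))); last first.
    by move=> v; rewrite part_label_AB.
  move: alt; rewrite filter_map sorted_map; apply: sub_sorted => u v /=.
  by rewrite /AB_alternating !part_label_A !part_label_B.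
rewrite count_map in odd_ST.
by rewrite (eq_count (a2 := preim part_label (leq 2))) // => v; rewrite /= part_label_ST.
Qed.

End PartitionLabels.

Section Neighbourhoods.
Variables (V : finType) (E : rel V).

Definition nbrs (b : bool) (X : {set V}) (v : V) : {set V} :=
  [set y in X | oriented_edge E b v y].
Definition non_nbrs (b : bool) (X : {set V}) (v : V) : {set V} :=
  [set y in X | ~~ oriented_edge E b v y].

Lemma nbrsP b (X : {set V}) v y : reflect (y \in X /\ oriented_edge E b v y) (y \in nbrs b X v).
Proof. by rewrite inE; apply: andP. Qed.

Lemma nbrsU b (X Y : {set V}) v : nbrs b (X :|: Y) v = nbrs b X v :|: nbrs b Y v.
Proof. by apply/setP => y; rewrite !inE andb_orl. Qed.

Lemma notin_non_nbrs b (X : {set V}) v y :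
  y \in X -> y \notin non_nbrs b X v -> oriented_edge E b v y.
Proof. by rewrite inE => ->; rewrite negbK. Qed.

Lemma card_non_nbrsUl b (X Y : {set V}) v : #|non_nbrs b X v| <= #|non_nbrs b (X :|: Y) v|.
Proof. by apply/subset_leq_card/subsetP => y; rewrite !inE => /andP[-> ->]. Qed.

Lemma card_non_nbrsUr b (X Y : {set V}) v : #|non_nbrs b Y v| <= #|non_nbrs b (X :|: Y) v|.
Proof. by rewrite setUC; exact: card_non_nbrsUl. Qed.

Lemma card_nbrs_add b (X : {set V}) v : #|nbrs b X v| + #|non_nbrs b X v| = #|X|.
Proof.
rewrite -cardsU_disjoint => [|y]; last by rewrite !inE => /andP[_ ->]; rewrite andbF.
have -> // : nbrs b X v :|: non_nbrs b X v = X.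
by apply/setP => y; rewrite !inE -andb_orr orbN andbT.
Qed.

End Neighbourhoods.

Definition side (V : finType) (X Y : {set V}) (c : bool) : {set V} := if c then X else Y.

Fixpoint alt_AB_word (c : bool) (m : nat) : seq nat :=
  if m is m'.+1 then (if c then 0 else 1) :: alt_AB_word (~~ c) m' else [::].

Section AlternatingExtension.
Variables (V : finType) (E : rel V) (A B S T ExA ExB : {set V}) (k M : nat).
Hypothesis partABST : is_partition4 A B S T.
Hypothesis typical_AB : forall c v, v \in side A B c -> v \notin side ExA ExB c ->
  forall b, #|non_nbrs E b (side A B (~~ c)) v| <= k.
Hypothesis card_exc_AB : forall c, #|side ExA ExB c| <= k.
Hypothesis card_side_AB : forall c, M <= #|side A B c|.

Local Notation lab := (part_label A B S).

Lemma part_label_side c v : v \in side A B c -> lab v = if c then 0 else 1.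
Proof.
by case: c => /=; [exact: (part_label_inA partABST) | exact: (part_label_inB partABST)].
Qed.

Lemma alternating_extension bs : forall c v (W : {set V}),
  v \in side A B c -> v \notin side ExA ExB c -> v \in W ->
  #|W| + size bs + 2 * k < M ->
  exists q, [/\ oriented_path E bs (v :: q), uniq q,
     all (fun x => x \notin W) q & map lab q = alt_AB_word (~~ c) (size bs)].
Proof.
elim: bs => [|b bs IH] c v W vc vx vW /= cardW; first by exists [::].
have [|y [yc yN yx yW]] :=
  @exists_notin3 _ (side A B (~~ c)) (non_nbrs E b (side A B (~~ c)) v)
    (side ExA ExB (~~ c)) W.
  by have := typical_AB vc vx b; have := card_exc_AB (~~ c); have := card_side_AB (~~ c); lia.
have [|q [pq uq qW lq]] := IH (~~ c) y (y |: W) yc yx (setU11 _ _).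
  by rewrite cardsU1 yW; move: cardW; clear; lia.
exists (y :: q); split => /=.
- by rewrite (notin_non_nbrs yc yN).
- by rewrite uq andbT; apply/negP => /(allP qW); rewrite setU11.
- by rewrite yW; apply: sub_all qW => x; rewrite inE negb_or => /andP[].
- by rewrite (part_label_side yc) lq negbK.
Qed.

Lemma extend_path_both_ends (bl bc br : seq bool) (x : V) (s : seq V) cL cR (W : {set V}) :
  x \in side A B cL -> x \notin side ExA ExB cL ->
  last x s \in side A B cR -> last x s \notin side ExA ExB cR ->
  oriented_path E bc (x :: s) -> uniq (x :: s) -> all (fun y => y \notin W) (x :: s) ->
  #|W| + size bl + size (x :: s) + size br + 2 * k < M ->
  exists t, [/\ oriented_path E (bl ++ bc ++ br) t, uniq t, all (fun y => y \notin W) t &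
     map lab t = rev (alt_AB_word (~~ cL) (size bl)) ++ map lab (x :: s)
                   ++ alt_AB_word (~~ cR) (size br)].
Proof.
set c := x :: s => xL xLx zR zRx pc uc cW cardW.
pose W1 := W :|: [set y in c].
have cardW1 : #|W1| <= #|W| + size c.
  by apply: leq_trans (leq_card_setU _ _).1 _; rewrite leq_add2l card_set_seq.
have xW1 : x \in W1 by rewrite !inE eqxx orbT.
have [|ql [pl ul qlW1 ll]] := @alternating_extension (rev (map negb bl)) cL x W1 xL xLx xW1.
  by rewrite size_rev size_map; move: cardW cardW1; clear; lia.
pose W2 := W1 :|: [set y in ql].
have cardW2 : #|W2| <= #|W| + size c + size bl.
  apply: leq_trans (leq_card_setU _ _).1 _; apply: leq_add => //.
  have /eqP := size_oriented_path pl; rewrite /= eqSS size_rev size_map => /eqP <-.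
  exact: card_set_seq.
have zW2 : last x s \in W2 by rewrite in_setU in_setU in_set mem_last orbT.
have [|qr [pr ur qrW2 lr]] := @alternating_extension br cR (last x s) W2 zR zRx zW2.
  by move: cardW cardW2; clear; lia.
exists (rev ql ++ c ++ qr); split.
- have := oriented_path_rev pl; rewrite map_rev revK (mapK negbK) rev_cons => pl'.
  apply: (oriented_path_cat pl').
  have pc' : oriented_path E bc (rcons (belast x s) (last x s)) by rewrite -lastI.
  by rewrite -cat_cons lastI cat_rcons; exact: oriented_path_cat pc' pr.
- rewrite cat_uniq rev_uniq ul cat_uniq uc ur !andbT.
  apply/and4P; split => //; apply/hasPn => y.
    rewrite mem_cat mem_rev => /orP[yc|yqr]; apply/negP => yql.
      by move/negP: (allP qlW1 y yql); apply; apply/setUP; right; rewrite inE.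
    by move/negP: (allP qrW2 y yqr); apply; apply/setUP; right; rewrite inE.
  by move=> /(allP qrW2); rewrite !inE !negb_or => /andP[/andP[_]].
- rewrite !all_cat all_rev cW /=; apply/andP; split.
  + by apply: sub_all qlW1 => y; rewrite !inE negb_or => /andP[].
  + by apply: sub_all qrW2 => y; rewrite !inE !negb_or => /andP[/andP[]].
- by rewrite !map_cat map_rev ll lr size_rev size_map.
Qed.

End AlternatingExtension.

Lemma is_partition4_swap (V : finType) (A B S T : {set V}) :
  is_partition4 A B S T -> is_partition4 B A T S.
Proof.
case=> cover /and5P[dAB dAS dAT dBS /andP[dBT dST]]; split.
  rewrite -cover; apply/setP => v; rewrite !inE.
  by case: (v \in A); case: (v \in B); case: (v \in S); case: (v \in T).
by rewrite disjoint_sym dAB dBT dBS dAT dAS disjoint_sym dST.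
Qed.

Definition swap_label (i : nat) : nat :=
  if i == 0 then 1 else if i == 1 then 0 else if i == 2 then 3 else 2.

Lemma part_label_swap (V : finType) (A B S T : {set V}) :
  is_partition4 A B S T -> part_label B A T =1 swap_label \o part_label A B S.
Proof.
move=> partABST v; have [lA lB lS lT] := part_labelP partABST v.
rewrite /= [part_label B A T v]/part_label lA lB lT.
by case: (part_label A B S v) (part_label_lt4 A B S v) => [|[|[|[|]]]].
Qed.

Lemma useful_word_swap ab (w : seq nat) :
  w != [::] -> useful_word ab (map swap_label w) = useful_word (~~ ab) w.
Proof.
have swap_first b i : (swap_label i == (if b then 0 else 1)) = (i == (if ~~ b then 0 else 1)).
  by case: b; case: i => [|[|[|[|i]]]].
have swap_last b i : (swap_label i == (if b then 1 else 0)) = (i == (if ~~ b then 1 else 0)).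
  by case: b; case: i => [|[|[|[|i]]]].
case: w => [|x w] // _; set w' := x :: w; rewrite /useful_word.
have -> : head 4 (map swap_label w') = swap_label (head 4 w') by [].
have -> : last 4 (map swap_label w') = swap_label (last 4 w') by rewrite /= last_map.
rewrite swap_first swap_last; congr [&& _, _, _ & _].
  rewrite filter_map sorted_map.
  rewrite (eq_filter (a2 := fun i => i < 2)); last by case=> [|[|[|[|i]]]].
  case: [seq i <- w' | i < 2] => //= y s; apply: eq_path.
  by case=> [|[|[|[|i]]]]; case=> [|[|[|[|j]]]].
by rewrite count_map; congr odd; apply: eq_count; case=> [|[|[|[|i]]]].
Qed.

(* Integer form of the ABST-conditions: [k] bounds the sizes of the exceptional
   sets [ExA, ..., ExT] and the numbers of non-neighbours of their complements,
   [M] bounds the part sizes and the minimum degrees from below. *)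
Record discrete_ABST (V : finType) (E : rel V) (A B S T ExA ExB ExS ExT : {set V})
    (k M : nat) : Prop := DiscreteABST {
  dA_part : is_partition4 A B S T;
  dA_slack : 4 * k + 60 <= M;
  dA_exA : #|ExA| <= k;
  dA_exB : #|ExB| <= k;
  dA_exS : #|ExS| <= k;
  dA_exT : #|ExT| <= k;
  dA_A : M <= #|A|;
  dA_B : M <= #|B|;
  dA_S : M <= #|S|;
  dA_T : M <= #|T|;
  dA_inA : forall y, y \in A -> M <= #|nbrs E false B y|;
  dA_inB : forall y, y \in B -> M <= #|nbrs E false A y|;
  dA_inS : forall y, y \in S -> M <= #|nbrs E false (A :|: S) y|;
  dA_inT : forall y, y \in T -> M <= #|nbrs E false (B :|: T) y|;
  dA_typA : forall v, v \in A -> v \notin ExA -> forall b, #|non_nbrs E b B v| <= k;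
  dA_typB : forall v, v \in B -> v \notin ExB -> forall b, #|non_nbrs E b A v| <= k;
  dA_typS : forall v, v \in S -> v \notin ExS ->
    #|non_nbrs E true (B :|: S) v| <= k /\ #|non_nbrs E false (A :|: S) v| <= k;
  dA_typT : forall v, v \in T -> v \notin ExT ->
    #|non_nbrs E true (A :|: T) v| <= k /\ #|non_nbrs E false (B :|: T) v| <= k
}.

Lemma discrete_ABST_swap (V : finType) (E : rel V) (A B S T ExA ExB ExS ExT : {set V}) k M :
  discrete_ABST E A B S T ExA ExB ExS ExT k M ->
  discrete_ABST E B A T S ExB ExA ExT ExS k M.
Proof. by case=> *; constructor => //; exact: is_partition4_swap. Qed.

Section UsefulPathFromCore.
Variables (V : finType) (E : rel V) (A B S T ExA ExB ExS ExT : {set V}) (k M : nat).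
Hypothesis D : discrete_ABST E A B S T ExA ExB ExS ExT k M.

Local Notation lab := (part_label A B S).

Lemma typical_side c v : v \in side A B c -> v \notin side ExA ExB c ->
  forall b, #|non_nbrs E b (side A B (~~ c)) v| <= k.
Proof. by case: c => /= vc vx b; [exact: (dA_typA D vc vx b) | exact: (dA_typB D vc vx b)]. Qed.

Lemma card_exc_side c : #|side ExA ExB c| <= k.
Proof. by case: c => /=; [exact: dA_exA D | exact: dA_exB D]. Qed.

Lemma card_side c : M <= #|side A B c|.
Proof. by case: c => /=; [exact: dA_A D | exact: dA_B D]. Qed.

Definition has_useful_path (L : seq bool) (ab : bool) (W : {set V}) : Prop :=
  exists s, [/\ uniq s, oriented_path E L s, all (fun x => x \notin W) s &
               useful_word ab (map lab s)].

Lemma useful_path_of_core (L : 8.-tuple bool) ab (W : {set V}) (bl bc br : seq bool)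
    (x : V) (s : seq V) cL cR :
  x \in side A B cL -> x \notin side ExA ExB cL ->
  last x s \in side A B cR -> last x s \notin side ExA ExB cR ->
  oriented_path E bc (x :: s) -> uniq (x :: s) -> all (fun y => y \notin W) (x :: s) ->
  #|W| <= 9 -> tval L = bl ++ bc ++ br ->
  useful_word ab (rev (alt_AB_word (~~ cL) (size bl)) ++ map lab (x :: s)
                  ++ alt_AB_word (~~ cR) (size br)) ->
  has_useful_path L ab W.
Proof.
move=> xL xLx zR zRx pc uc cW cardW eqL uw.
have size9 : size bl + size (x :: s) + size br = 9.
  have := size_tuple L; rewrite eqL !size_cat (size_oriented_path pc) /=.
  by clear; lia.
have [|t [pt ut tW lt]] := extend_path_both_ends (dA_part D) typical_side card_exc_side
  card_side (bl := bl) (br := br) xL xLx zR zRx pc uc cW.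
  by move: (dA_slack D) cardW size9; clear; lia.
by exists t; rewrite eqL lt.
Qed.

(* [M > 2 (2k + 30)] leaves room for all the greedy choices below. *)
Lemma pick_vertex_half (P X W : {set V}) :
  M <= 2 * #|P| -> #|X| <= k -> #|W| <= 20 -> exists y, [/\ y \in P, y \notin X & y \notin W].
Proof.
move=> MP Xk Wk; have [|y [yP _ yX yW]] := exists_notin3 (P := P) (X := set0) (Y := X) (Z := W).
  by rewrite cards0; move: (dA_slack D) MP Xk Wk; clear; lia.
by exists y.
Qed.

Lemma pick_vertex (P N X W : {set V}) :
  M <= #|P| -> #|N| <= k -> #|X| <= k -> #|W| <= 20 ->
  exists y, [/\ y \in P, y \notin N, y \notin X & y \notin W].
Proof.
move=> MP Nk Xk Wk; apply: exists_notin3.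
by move: (dA_slack D) MP Nk Xk Wk; clear; lia.
Qed.

Lemma transit_through_S (W : {set V}) : #|W| <= 20 ->
  exists a w b, [/\ a \in A, a \notin ExA, b \in B, b \notin ExB &
                    [/\ w \in S, E a w, E w b & all (fun x => x \notin W) [:: a; w; b]]].
Proof.
move=> cardW; have MS : M <= 2 * #|S| by rewrite mul2n -addnn (leq_trans (dA_S D)) ?leq_addr.
have [w [wS wx wW]] := pick_vertex_half MS (dA_exS D) cardW.
have [out_w in_w] := dA_typS D wS wx.
have [a [aA aN ax aW]] :=
  pick_vertex (dA_A D) (leq_trans (card_non_nbrsUl _ _ _ _ _) in_w) (dA_exA D) cardW.
have [b [bB bN bx bW]] :=
  pick_vertex (dA_B D) (leq_trans (card_non_nbrsUl _ _ _ _ _) out_w) (dA_exB D) cardW.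
exists a, w, b; split => //; split => //=; last by rewrite aW wW bW.
- exact: (notin_non_nbrs aA aN).
- exact: (notin_non_nbrs bB bN).
Qed.

End UsefulPathFromCore.

Lemma useful_word_through_ST i c ab l :
  i < 7 -> 2 <= l < 4 -> c = (if odd i then ~~ ab else ab) ->
  useful_word ab (rev (alt_AB_word (~~ c) i) ++
                  [:: (if c then 0 else 1); l; (if ~~ c then 0 else 1)] ++
                  alt_AB_word c (8 - i.+2)).
Proof.
move=> i7 /andP[l2 l4] ->; case: ab; case: l l2 l4 => [|[|[|[|l]]]] // _ _;
  by do 7! (case: i i7 => [|i] i7; first by []).
Qed.

Definition alt_orient (v : bool) : seq bool := [:: v; ~~ v; v; ~~ v; v; ~~ v; v; ~~ v].

Lemma repeated_or_alternating (L : 8.-tuple bool) :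
  (exists2 i, i < 7 & nth false L i = nth false L i.+1) \/
  tval L = alt_orient (nth false L 0).
Proof.
have [/hasP[i] | norep] := boolP (has (fun i => nth false L i == nth false L i.+1) (iota 0 7)).
  by rewrite mem_iota => /andP[_ i7] /eqP eqLi; left; exists i.
right; move: norep; case: L => [[|l0 [|l1 [|l2 [|l3 [|l4 [|l5 [|l6 [|l7 [|]]]]]]]]]] //= _.
by case: l0; case: l1; case: l2; case: l3; case: l4; case: l5; case: l6; case: l7.
Qed.

(* Proves [uniq s] for an explicit [s]: vertices with distinct labels [lab]
   are told apart by the label hypotheses, the others by [x != y] hypotheses. *)
Ltac distinct_by_labels lab :=
  rewrite /= !inE !negb_or ?andbT; repeat (apply/andP; split);
  solve [ done | rewrite eq_sym; done
        | apply/eqP => /(congr1 lab);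
          by repeat match goal with H : lab _ = _ |- _ => rewrite H end ].

Section UsefulPathThroughGadget.
Variables (V : finType) (E : rel V) (A B S T ExA ExB ExS ExT : {set V}) (k M : nat).
Hypothesis D : discrete_ABST E A B S T ExA ExB ExS ExT k M.

Local Notation lab := (part_label A B S).
Local Notation useful_path := (has_useful_path E A B S).

Lemma core_through_ST (c bt : bool) (W : {set V}) : #|W| <= 20 ->
  exists p w q, [/\ p \in side A B c, p \notin side ExA ExB c, q \in side A B (~~ c),
     q \notin side ExA ExB (~~ c) &
     [/\ w \in S :|: T, oriented_path E [:: bt; bt] [:: p; w; q],
         uniq [:: p; w; q] & all (fun x => x \notin W) [:: p; w; q]]].
Proof.
move=> cardW; have partABST := dA_part D.
have [a [w [b [aA ax bB bx [wS eaw ewb avoid]]]]] := transit_through_S D cardW.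
have [a' [w' [b' [aB ax' bA bx' [wT eaw' ewb' avoid']]]]] :=
  transit_through_S (discrete_ABST_swap D) cardW.
have la := part_label_inA partABST aA; have lb := part_label_inB partABST bB.
have lw := part_label_inS partABST wS; have lw' := part_label_inT partABST wT.
have la' := part_label_inB partABST aB; have lb' := part_label_inA partABST bA.
have wST : w \in S :|: T by rewrite inE wS.
have wST' : w' \in S :|: T by rewrite inE wT orbT.
case: c; case: bt.
- exists a, w, b; split=> //; split=> //; first by rewrite /= eaw ewb.
  by distinct_by_labels (part_label A B S).
- exists b', w', a'; split=> //; split=> //; first by rewrite /= eaw' ewb'.
    by distinct_by_labels (part_label A B S).
  by rewrite -[[:: _; _; _]]/(rev [:: a'; w'; b']) all_rev.
- exists a', w', b'; split=> //; split=> //; first by rewrite /= eaw' ewb'.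
  by distinct_by_labels (part_label A B S).
- exists b, w, a; split=> //; split=> //; first by rewrite /= eaw ewb.
    by distinct_by_labels (part_label A B S).
  by rewrite -[[:: _; _; _]]/(rev [:: a; w; b]) all_rev.
Qed.

Lemma useful_path_repeated_orientation (L : 8.-tuple bool) ab (W : {set V}) i :
  #|W| <= 9 -> i < 7 -> nth false L i = nth false L i.+1 -> useful_path L ab W.
Proof.
move=> cardW i7 eqLi; have partABST := dA_part D.
(* An A/B-alternating path starting in side [ab] has position [i] in side [c]. *)
set c := if odd i then ~~ ab else ab.
have [|p [w [q [pc px qc qx [wST pw uw aw]]]]] := core_through_ST c (nth false L i) (W := W).
  exact: leq_trans cardW _.
apply: (useful_path_of_core D (bl := take i L) (br := drop i.+2 L) (s := [:: w; q])
  pc px qc qx pw uw aw cardW).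
  rewrite -{1}(cat_take_drop i L); congr (_ ++ _).
  have iL : i < size L by rewrite size_tuple (ltn_trans i7).
  have i1L : i.+1 < size L by rewrite size_tuple.
  by rewrite (drop_nth false iL) (drop_nth false i1L) -eqLi.
rewrite size_take size_drop size_tuple (ltn_trans i7) //= (part_label_side partABST pc).
rewrite (part_label_side partABST qc) negbK; apply: useful_word_through_ST => //.
by rewrite -(part_label_ST partABST) wST part_label_lt4.
Qed.

(* For antidirected [L] the core is a short antidirected path through the gadget
   edge [x -> y]; it is placed, forwards or backwards, at an offset in [L] that
   makes the alternating extensions end in the prescribed sides. *)
Lemma useful_path_gadget_SA (L : 8.-tuple bool) ab (W : {set V}) v x y :
  x \in S -> x \notin ExS -> y \in A -> E x y -> x \notin W -> y \notin W -> #|W| <= 9 ->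
  tval L = alt_orient v -> useful_path L ab W.
Proof.
move=> xS xx yA exy xW yW cardW eqL; have partABST := dA_part D.
have cardW20 : #|W| <= 20 by exact: leq_trans cardW _.
have [out_x _] := dA_typS D xS xx.
have [w1 [w1B w1N w1x w1W]] :=
  pick_vertex D (dA_B D) (leq_trans (card_non_nbrsUl _ _ _ _ _) out_x) (dA_exB D) cardW20.
have ew1 : E x w1 := notin_non_nbrs w1B w1N.
have cardW1 : #|w1 |: W| <= 20 by rewrite cardsU1 (leq_trans (leq_add (leq_b1 _) cardW)).
have inB_y : M <= 2 * #|nbrs E false B y|.
  by rewrite mul2n -addnn (leq_trans (dA_inA D yA)) ?leq_addr.
have [w2 [/nbrsP[w2B ew2] w2x]] := pick_vertex_half D inB_y (dA_exB D) cardW1.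
have {}ew2 : E w2 y := ew2.
rewrite !inE negb_or => /andP[w21 w2W].
have l1 := part_label_inB partABST w1B; have l2 := part_label_inB partABST w2B.
have lx := part_label_inS partABST xS; have ly := part_label_inA partABST yA.
have p1 : oriented_path E [:: false; true; false] [:: w1; x; y; w2] by rewrite /= ew1 exy ew2.
have p2 : oriented_path E [:: true; false; true] [:: w2; y; x; w1] by rewrite /= ew1 exy ew2.
have u1 : uniq [:: w1; x; y; w2] by distinct_by_labels (part_label A B S).
have u2 : uniq [:: w2; y; x; w1] by distinct_by_labels (part_label A B S).
have a1 : all (fun z => z \notin W) [:: w1; x; y; w2] by rewrite /= w1W xW yW w2W.
have a2 : all (fun z => z \notin W) [:: w2; y; x; w1] by rewrite /= w1W xW yW w2W.
case: v eqL => eqL; case: ab.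
- by apply: (useful_path_of_core D (bl := [:: true; false; true]) (br := [:: true; false])
    (cL := false) (cR := false) _ _ _ _ p1 u1 a1 cardW eqL) => //; rewrite /= l1 lx ly l2.
- by apply: (useful_path_of_core D (bl := [:: true; false]) (br := [:: false; true; false])
    (cL := false) (cR := false) _ _ _ _ p2 u2 a2 cardW eqL) => //; rewrite /= l1 lx ly l2.
- by apply: (useful_path_of_core D (bl := [:: false; true; false]) (br := [:: false; true])
    (cL := false) (cR := false) _ _ _ _ p2 u2 a2 cardW eqL) => //; rewrite /= l1 lx ly l2.
- by apply: (useful_path_of_core D (bl := [:: false; true]) (br := [:: true; false; true])
    (cL := false) (cR := false) _ _ _ _ p1 u1 a1 cardW eqL) => //; rewrite /= l1 lx ly l2.
Qed.

Lemma useful_path_gadget_STB (L : 8.-tuple bool) ab (W : {set V}) v x y :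
  x \in S -> x \notin ExS -> y \in T -> M <= 2 * #|nbrs E false B y| ->
  E x y -> x \notin W -> y \notin W -> #|W| <= 9 ->
  tval L = alt_orient v -> useful_path L ab W.
Proof.
move=> xS xx yT inB_y exy xW yW cardW eqL; have partABST := dA_part D.
have cardW20 : #|W| <= 20 by exact: leq_trans cardW _.
have cardWx : #|x |: W| <= 20 by rewrite cardsU1 (leq_trans (leq_add (leq_b1 _) cardW)).
have [out_x _] := dA_typS D xS xx.
have [w [wS wN wx]] :=
  pick_vertex D (dA_S D) (leq_trans (card_non_nbrsUr _ _ _ _ _) out_x) (dA_exS D) cardWx.
rewrite !inE negb_or => /andP[wx' wW].
have ew : E x w := notin_non_nbrs wS wN.
have [_ in_w] := dA_typS D wS wx.
have [u [uA uN ux uW]] :=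
  pick_vertex D (dA_A D) (leq_trans (card_non_nbrsUl _ _ _ _ _) in_w) (dA_exA D) cardW20.
have eu : E u w := notin_non_nbrs uA uN.
have [z [/nbrsP[zB ez] zx zW]] := pick_vertex_half D inB_y (dA_exB D) cardW20.
have {}ez : E z y := ez.
have lu := part_label_inA partABST uA; have lw := part_label_inS partABST wS.
have lx := part_label_inS partABST xS; have ly := part_label_inT partABST yT.
have lz := part_label_inB partABST zB.
have p1 : oriented_path E [:: true; false; true; false] [:: u; w; x; y; z].
  by rewrite /= eu ew exy ez.
have p2 : oriented_path E [:: true; false; true; false] [:: z; y; x; w; u].
  by rewrite /= eu ew exy ez.
have u1 : uniq [:: u; w; x; y; z] by distinct_by_labels (part_label A B S).
have u2 : uniq [:: z; y; x; w; u] by distinct_by_labels (part_label A B S).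
have a1 : all (fun v => v \notin W) [:: u; w; x; y; z] by rewrite /= uW wW xW yW zW.
have a2 : all (fun v => v \notin W) [:: z; y; x; w; u] by rewrite /= uW wW xW yW zW.
case: v eqL => eqL; case: ab.
- by apply: (useful_path_of_core D (bl := [:: true; false]) (br := [:: true; false])
    (cL := true) (cR := false) _ _ _ _ p1 u1 a1 cardW eqL) => //; rewrite /= lu lw lx ly lz.
- by apply: (useful_path_of_core D (bl := [:: true; false]) (br := [:: true; false])
    (cL := false) (cR := true) _ _ _ _ p2 u2 a2 cardW eqL) => //; rewrite /= lu lw lx ly lz.
- by apply: (useful_path_of_core D (bl := [:: false; true; false]) (br := [:: true])
    (cL := false) (cR := true) _ _ _ _ p2 u2 a2 cardW eqL) => //; rewrite /= lu lw lx ly lz.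
- by apply: (useful_path_of_core D (bl := [:: false]) (br := [:: true; false; true])
    (cL := true) (cR := false) _ _ _ _ p1 u1 a1 cardW eqL) => //; rewrite /= lu lw lx ly lz.
Qed.

Lemma useful_path_gadget_STT (L : 8.-tuple bool) ab (W : {set V}) v x y :
  x \in S -> x \notin ExS -> y \in T -> M <= 2 * #|nbrs E false T y| ->
  E x y -> x \notin W -> y \notin W -> #|W| <= 9 ->
  tval L = alt_orient v -> useful_path L ab W.
Proof.
move=> xS xx yT inT_y exy xW yW cardW eqL; have partABST := dA_part D.
have cardW20 : #|W| <= 20 by exact: leq_trans cardW _.
have cardWy : #|y |: W| <= 20 by rewrite cardsU1 (leq_trans (leq_add (leq_b1 _) cardW)).
have [out_x _] := dA_typS D xS xx.
have [z [zB zN zx zW]] :=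
  pick_vertex D (dA_B D) (leq_trans (card_non_nbrsUl _ _ _ _ _) out_x) (dA_exB D) cardW20.
have ez : E x z := notin_non_nbrs zB zN.
have [w [/nbrsP[wT ew] wx]] := pick_vertex_half D inT_y (dA_exT D) cardWy.
rewrite !inE negb_or => /andP[wy wW].
have {}ew : E w y := ew.
have [out_w _] := dA_typT D wT wx.
have [u [uA uN ux uW]] :=
  pick_vertex D (dA_A D) (leq_trans (card_non_nbrsUl _ _ _ _ _) out_w) (dA_exA D) cardW20.
have eu : E w u := notin_non_nbrs uA uN.
have lu := part_label_inA partABST uA; have lw := part_label_inT partABST wT.
have lx := part_label_inS partABST xS; have ly := part_label_inT partABST yT.
have lz := part_label_inB partABST zB.
have p1 : oriented_path E [:: false; true; false; true] [:: z; x; y; w; u].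
  by rewrite /= eu ew exy ez.
have p2 : oriented_path E [:: false; true; false; true] [:: u; w; y; x; z].
  by rewrite /= eu ew exy ez.
have u1 : uniq [:: z; x; y; w; u] by distinct_by_labels (part_label A B S).
have u2 : uniq [:: u; w; y; x; z] by distinct_by_labels (part_label A B S).
have a1 : all (fun v => v \notin W) [:: z; x; y; w; u] by rewrite /= uW wW xW yW zW.
have a2 : all (fun v => v \notin W) [:: u; w; y; x; z] by rewrite /= uW wW xW yW zW.
case: v eqL => eqL; case: ab.
- by apply: (useful_path_of_core D (bl := [:: true; false; true]) (br := [:: false])
    (cL := false) (cR := true) _ _ _ _ p1 u1 a1 cardW eqL) => //; rewrite /= lu lw lx ly lz.
- by apply: (useful_path_of_core D (bl := [:: true; false; true]) (br := [:: false])
    (cL := true) (cR := false) _ _ _ _ p2 u2 a2 cardW eqL) => //; rewrite /= lu lw lx ly lz.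
- by apply: (useful_path_of_core D (bl := [:: false; true; false; true]) (br := [::])
    (cL := true) (cR := false) _ _ _ _ p2 u2 a2 cardW eqL) => //; rewrite /= lu lw lx ly lz.
- by apply: (useful_path_of_core D (bl := [:: false; true; false; true]) (br := [::])
    (cL := false) (cR := true) _ _ _ _ p1 u1 a1 cardW eqL) => //; rewrite /= lu lw lx ly lz.
Qed.

Lemma useful_path_gadget_S (L : 8.-tuple bool) ab (W : {set V}) x y :
  x \in S -> x \notin ExS -> y \in A :|: T -> E x y -> x \notin W -> y \notin W ->
  #|W| <= 9 -> useful_path L ab W.
Proof.
move=> xS xx yAT exy xW yW cardW.
have [[i i7 eqLi] | eqL] := repeated_or_alternating L.
  exact: (useful_path_repeated_orientation _ cardW i7 eqLi).
case/setUP: yAT => [yA | yT]; first exact: (useful_path_gadget_SA ab xS xx yA exy xW yW cardW eqL).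
have inBT_y : M <= #|nbrs E false B y| + #|nbrs E false T y|.
  by rewrite (leq_trans (dA_inT D yT)) // nbrsU (leq_card_setU _ _).1.
have [inB_y | ltB] := leqP M (2 * #|nbrs E false B y|).
  exact: (useful_path_gadget_STB ab xS xx yT inB_y exy xW yW cardW eqL).
apply: (useful_path_gadget_STT ab xS xx yT _ exy xW yW cardW eqL).
by move: inBT_y ltB; clear; lia.
Qed.

End UsefulPathThroughGadget.

Definition gadget_edge (V : finType) (E : rel V) (A B S T ExS ExT : {set V}) (x y : V) : Prop :=
  [/\ x \in S, x \notin ExS, y \in A :|: T & E x y] \/
  [/\ x \in T, x \notin ExT, y \in B :|: S & E x y].

Lemma gadget_edge_swap (V : finType) (E : rel V) (A B S T ExS ExT : {set V}) x y :
  gadget_edge E B A T S ExT ExS x y -> gadget_edge E A B S T ExS ExT x y.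
Proof. by case=> h; [right | left]. Qed.

Lemma useful_path_gadget (V : finType) (E : rel V) (A B S T ExA ExB ExS ExT : {set V}) k M
    (L : 8.-tuple bool) ab (W : {set V}) x y :
  discrete_ABST E A B S T ExA ExB ExS ExT k M ->
  gadget_edge E A B S T ExS ExT x y -> x \notin W -> y \notin W -> #|W| <= 9 ->
  has_useful_path E A B S L ab W.
Proof.
move=> D [[xS xx yAT exy] | [xT xx yBS exy]] xW yW cardW.
  exact: (useful_path_gadget_S D L ab xS xx yAT exy xW yW cardW).
have [s [us ps sW ws]] :=
  useful_path_gadget_S (discrete_ABST_swap D) L (~~ ab) xT xx yBS exy xW yW cardW.
exists s; split=> //.
rewrite (eq_map (part_label_swap (dA_part D))) map_comp useful_word_swap ?negbK // in ws.
by have := size_oriented_path ps; case: s {us sW ps}.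
Qed.

Section OutNeighbours.
Variables (V : finType) (E : rel V) (n : nat) (A B S T : {set V}).
Hypothesis loopE : loopless E.
Hypothesis half_outdeg : forall x, n <= 2 * dplus E setT x.
Hypothesis cardV : #|V| = n.
Hypothesis partABST : is_partition4 A B S T.

Lemma half_le_card_out_nbrs x (X : {set V}) :
  (forall y, E x y -> y \in X) -> n <= 2 * #|X :\ x|.
Proof.
move=> out_sub; apply: (leq_trans (half_outdeg x)); rewrite leq_mul2l /dplus.
apply/orP; right; apply/subset_leq_card/subsetP => y; rewrite !inE => exy.
by rewrite (out_sub _ exy) andbT; apply: contraTneq exy => ->; exact: loopE.
Qed.

Lemma out_nbr_AT : 2 * (#|B| + #|S|) < n + 2 -> forall x, x \in S -> exists2 y, y \in A :|: T & E x y.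
Proof.
move=> small x xS; have [_ card_BS _ _] := card_partsU partABST.
case: (pickP [pred y | (y \in A :|: T) && E x y]) => [y /andP[]|none].
  by exists y.
have : n <= 2 * #|(B :|: S) :\ x|.
  apply: half_le_card_out_nbrs => y exy.
  by rewrite (part_label_BS partABST); have := none y; rewrite /= exy andbT => ->.
by have := cardsD1 x (B :|: S); rewrite card_BS inE xS orbT /=; move: small; clear; lia.
Qed.

Lemma unique_AT_target (x y1 : V) : x \in S ->
  (forall y, y \in A :|: T -> E x y -> y = y1) -> 2 * (#|A| + #|T|) < n + 2.
Proof.
move=> xS uniq_y1; have [_ card_BS _ _] := card_partsU partABST.
have : n <= 2 * #|(y1 |: (B :|: S)) :\ x|.
  apply: half_le_card_out_nbrs => y exy; rewrite !inE.
  have [yAT|] := boolP (y \in A :|: T); first by rewrite (uniq_y1 _ yAT exy) eqxx.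
  by rewrite -(part_label_BS partABST) inE => ->; rewrite orbT.
have := card_partition4 partABST; rewrite cardV.
have x_in : x \in y1 |: (B :|: S) by rewrite !inE xS !orbT.
have := cardsD1 x (y1 |: (B :|: S)); have := cardsU1 y1 (B :|: S).
rewrite x_in card_BS; lia.
Qed.

End OutNeighbours.

Section TwoGadgets.
Variables (V : finType) (E : rel V) (n : nat) (A B S T ExS ExT : {set V}) (k : nat).
Hypothesis loopE : loopless E.
Hypothesis half_outdeg : forall x, n <= 2 * dplus E setT x.
Hypothesis cardV : #|V| = n.
Hypothesis partABST : is_partition4 A B S T.
Hypothesis card_exS : #|ExS| <= k.
Hypothesis card_exT : #|ExT| <= k.
Hypothesis card_S : k + 3 <= #|S|.
Hypothesis card_T : k + 3 <= #|T|.

Local Notation gadget := (gadget_edge E A B S T ExS ExT).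

Lemma two_gadget_edges_S : (forall x, x \in S -> exists2 y, y \in A :|: T & E x y) ->
  exists x1 y1 x2 y2, [/\ gadget x1 y1, gadget x2 y2,
                          x1 \notin [set x2; y2] & y1 \notin [set x2; y2]].
Proof.
move=> out_AT.
have S_AT u v : u \in S -> v \in A :|: T -> u != v.
  by move=> uS; apply: contraTneq => <-; rewrite -(part_label_BS partABST) inE uS orbT.
have AT_BS u v : u \in A :|: T -> v \in B :|: S -> u != v.
  by move=> uAT; apply: contraTneq => <-; rewrite (part_label_BS partABST) uAT.
have [|x1 [x1S _ x1x _]] := exists_notin3 (P := S) (X := set0) (Y := ExS) (Z := set0).
  by rewrite !cards0; move: card_exS card_S; clear; lia.
have [y1 y1AT e1] := out_AT x1 x1S.
pose S1 := S :\: (x1 |: ExS).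
have S1P x : x \in S1 -> [/\ x \in S, x \notin ExS & x != x1].
  by rewrite !inE negb_or => /andP[/andP[]].
have [/existsP[x /andP[xS1 /existsP[y /and3P[yAT yy1 exy]]]] | only_y1] :=
  boolP [exists x in S1, exists y in A :|: T, (y != y1) && E x y].
  have [xS xx xx1] := S1P x xS1.
  exists x1, y1, x, y; split; try by left.
    by rewrite !inE negb_or eq_sym xx1 S_AT.
  by rewrite !inE negb_or eq_sym S_AT // eq_sym yy1.
have {}only_y1 x y : x \in S1 -> y \in A :|: T -> E x y -> y = y1.
  move=> xS1 yAT exy; apply/eqP; apply: contraNT only_y1 => yy1.
  by apply/existsP; exists x; rewrite xS1; apply/existsP; exists y; rewrite yAT yy1 exy.
have cardS1 : 1 < #|S1|.
  rewrite cardsD (leq_trans _ (leq_sub2l _ (subset_leq_card (subsetIr S _)))) //.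
  by rewrite cardsU1; move: card_exS card_S; clear; lia.
have [x2 x2S1] : exists x2, x2 \in S1 by apply/card_gt0P; exact: ltnW.
have [x2S _ _] := S1P x2 x2S1.
have small_AT := unique_AT_target loopE half_outdeg cardV partABST x2S (only_y1 _^~ x2S1).
have out_BS := out_nbr_AT loopE half_outdeg (is_partition4_swap partABST).
have [|x3 [x3T x3x x3y1 _]] := exists_notin3 (P := T) (X := ExT) (Y := [set y1]) (Z := set0).
  by rewrite cards0 cards1; move: card_exT card_T; clear; lia.
have [y3 y3BS e3] := out_BS small_AT x3 x3T.
have [|x4 [x4S1 x4y3 _ _]] := exists_notin3 (P := S1) (X := [set y3]) (Y := set0) (Z := set0).
  by rewrite !cards0 cards1.
have [x4S x4x _] := S1P x4 x4S1.
have [y4 y4AT e4] := out_AT x4 x4S.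
have y41 := only_y1 _ _ x4S1 y4AT e4; subst y4.
rewrite !inE in x4y3 x3y1.
have x4x3 : x4 != x3 by apply: S_AT; rewrite // inE x3T orbT.
exists x4, y1, x3, y3; split; [by left | by right | |]; rewrite !inE negb_or.
  by rewrite x4x3.
by rewrite eq_sym x3y1 AT_BS.
Qed.

End TwoGadgets.

Lemma two_gadget_edges (V : finType) (E : rel V) n (A B S T ExS ExT : {set V}) k :
  loopless E -> (forall x, n <= 2 * dplus E setT x) -> #|V| = n -> is_partition4 A B S T ->
  #|ExS| <= k -> #|ExT| <= k -> k + 3 <= #|S| -> k + 3 <= #|T| ->
  exists x1 y1 x2 y2, [/\ gadget_edge E A B S T ExS ExT x1 y1,
                          gadget_edge E A B S T ExS ExT x2 y2,
                          x1 \notin [set x2; y2] & y1 \notin [set x2; y2]].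
Proof.
move=> loopE half_outdeg cardV partABST exS exT cardS cardT.
have := card_partition4 partABST; rewrite cardV => cardn.
have partBATS := is_partition4_swap partABST.
have [small_BS | large_BS] := ltnP (2 * (#|B| + #|S|)) (n + 2).
  exact: two_gadget_edges_S loopE half_outdeg cardV partABST exS exT cardS cardT
    (out_nbr_AT loopE half_outdeg partABST small_BS).
have small_AT : 2 * (#|A| + #|T|) < n + 2 by lia.
have [x1 [y1 [x2 [y2 [g1 g2 d1 d2]]]]] := two_gadget_edges_S loopE half_outdeg cardV
  partBATS exT exS cardT cardS (out_nbr_AT loopE half_outdeg partBATS small_AT).
by exists x1, y1, x2, y2; split => //; apply: gadget_edge_swap.
Qed.

Lemma two_disjoint_useful_paths (V : finType) (E : rel V) n
    (A B S T ExA ExB ExS ExT : {set V}) k M (L1 L2 : 8.-tuple bool) ab1 ab2 :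
  loopless E -> (forall x, n <= 2 * dplus E setT x) -> #|V| = n ->
  discrete_ABST E A B S T ExA ExB ExS ExT k M ->
  exists s1, [/\ uniq s1, oriented_path E L1 s1, useful_word ab1 (map (part_label A B S) s1) &
                 has_useful_path E A B S L2 ab2 [set x in s1]].
Proof.
move=> loopE half_outdeg cardV D.
have cardS : k + 3 <= #|S| by have := dA_S D; have := dA_slack D; lia.
have cardT : k + 3 <= #|T| by have := dA_T D; have := dA_slack D; lia.
have [x1 [y1 [x2 [y2 [g1 g2 x1W y1W]]]]] :=
  two_gadget_edges loopE half_outdeg cardV (dA_part D) (dA_exS D) (dA_exT D) cardS cardT.
have cardW1 : #|[set x2; y2]| <= 9 by rewrite cards2; case: (_ != _).
have [s1 [us1 ps1 s1W ws1]] := useful_path_gadget L1 ab1 D g1 x1W y1W cardW1.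
exists s1; split=> //.
have [x2s1 y2s1] : x2 \notin [set x in s1] /\ y2 \notin [set x in s1].
  by rewrite !inE; split; apply/negP => /(allP s1W); rewrite !inE eqxx ?orbT.
have cardW2 : #|[set x in s1]| <= 9.
  by rewrite (leq_trans (card_set_seq s1)) // (size_oriented_path ps1) size_tuple.
by have := useful_path_gadget L2 ab2 D g2 x2s1 y2s1 cardW2.
Qed.

Lemma useful_copy_of_path (V : finType) (E : rel V) (A B S T : {set V}) k (L : k.-tuple bool)
    ab (s : seq V) x0 :
  is_partition4 A B S T -> uniq s -> oriented_path E L s ->
  useful_word ab (map (part_label A B S) s) ->
  [/\ is_copy E L (fun i : 'I_k.+1 => nth x0 s i),
      is_useful A B S T (fun i : 'I_k.+1 => nth x0 s i) &
      is_XY_path (fun i : 'I_k.+1 => nth x0 s i) (pickXY ab A B).1 (pickXY ab A B).2].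
Proof.
move=> partABST us ps ws.
have sz : size s = k.+1 by rewrite (size_oriented_path ps) size_tuple.
have [useful XY] := useful_of_word partABST x0 sz ws.
by split=> //; exact: copy_of_oriented_path.
Qed.

Lemma disjoint_useful_copies (V : finType) (E : rel V) (A B S T : {set V})
    (L1 L2 : 8.-tuple bool) ab1 ab2 (s1 : seq V) :
  is_partition4 A B S T -> uniq s1 -> oriented_path E L1 s1 ->
  useful_word ab1 (map (part_label A B S) s1) ->
  has_useful_path E A B S L2 ab2 [set x in s1] ->
  exists (f1 f2 : 'I_9 -> V),
    [/\ is_copy E L1 f1, is_copy E L2 f2,
        (forall i j : 'I_9, f1 i != f2 j),
        is_useful A B S T f1 /\ is_useful A B S T f2 &
        is_XY_path f1 (pickXY ab1 A B).1 (pickXY ab1 A B).2 /\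
        is_XY_path f2 (pickXY ab2 A B).1 (pickXY ab2 A B).2].
Proof.
move=> partABST us1 ps1 ws1 [s2 [us2 ps2 s2_s1 ws2]].
have [x0 _] : exists x0 : V, x0 \in s1.
  have := size_oriented_path ps1; rewrite size_tuple.
  by case: s1 {us1 ps1 ws1 s2_s1} => // x0 s _; exists x0; rewrite mem_head.
have [c1 useful1 XY1] := useful_copy_of_path x0 partABST us1 ps1 ws1.
have [c2 useful2 XY2] := useful_copy_of_path x0 partABST us2 ps2 ws2.
exists (fun i => nth x0 s1 i), (fun i => nth x0 s2 i); split=> // i j.
have s2j : nth x0 s2 j \in s2 by rewrite mem_nth // (size_oriented_path ps2) size_tuple.
apply: contraTneq (allP s2_s1 _ s2j) => <-.
by rewrite inE negbK mem_nth // (size_oriented_path ps1) size_tuple.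
Qed.

Lemma nat_ceiling (r : R) : (0 <= r)%R -> exists k : nat, (r <= INR k <= r + 1)%R.
Proof.
move=> r0; have [up_gt up_le] := archimed r.
have up0 : (0 <= up r)%Z by apply: le_IZR; lra.
by exists (Z.to_nat (up r)); rewrite INR_IZR_INZ Znat.Z2Nat.id //; lra.
Qed.

Lemma Rpower_third_lt (eps eps1 : R) :
  (0 < eps1)%R -> (0 < eps < eps1 * eps1 * eps1)%R -> (Rpower eps (1 / 3) < eps1)%R.
Proof.
move=> eps1_gt0 [eps_gt0 eps_lt].
have cube : (eps1 * eps1 * eps1 = Rpower eps1 (INR 3))%R.
  by rewrite Rpower_pow //= Rmult_1_r Rmult_assoc.
have := Rlt_Rpower_l eps (eps1 * eps1 * eps1) (1 / 3) ltac:(lra) (conj eps_gt0 eps_lt).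
rewrite cube Rpower_mult.
have -> : (INR 3 * (1 / 3) = 1)%R by rewrite /=; field.
by rewrite Rpower_1.
Qed.

Lemma leq_of_Rn (m d : nat) (x : R) : (Rn m <= x)%R -> (x <= Rn d)%R -> m <= d.
Proof. by rewrite /Rn => m_x x_d; apply/leP/INR_le; lra. Qed.

Lemma Rn_addn (a b : nat) : (Rn a + Rn b)%R = Rn (a + b).
Proof. by rewrite /Rn; symmetry; exact: plus_INR. Qed.

Lemma non_nbrs_of_Rn (V : finType) (E : rel V) b (X : {set V}) v k (x : R) :
  (Rn #|X| - x <= Rn #|nbrs E b X v|)%R -> (x <= Rn k)%R -> #|non_nbrs E b X v| <= k.
Proof.
rewrite /Rn => X_le x_k.
have : #|X| <= #|nbrs E b X v| + k by apply/leP/INR_le; rewrite plus_INR; lra.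
by have := card_nbrs_add E b X v; lia.
Qed.

Lemma eta_n_large (eta1 : R) (N n : nat) :
  (0 < eta1)%R -> (200 / eta1 <= INR N)%R -> N <= n -> (200 <= eta1 * Rn n)%R.
Proof.
move=> eta0 N_ge Nn; rewrite /Rn.
have := Rmult_le_compat_l _ _ _ (Rlt_le _ _ eta0) N_ge.
have := Rmult_le_compat_l _ _ _ (Rlt_le _ _ eta0) (le_INR _ _ (leP Nn)).
have -> : (eta1 * (200 / eta1) = 200)%R by field; lra.
lra.
Qed.

Lemma slack_le_eta_n (eta1 eps1 : R) (n k : nat) :
  (eps1 < eta1 / 8)%R -> (200 <= eta1 * Rn n)%R -> (Rn k <= eps1 * Rn n + 1)%R ->
  (Rn (4 * k + 60) <= eta1 * Rn n)%R.
Proof.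
rewrite /Rn plus_INR mult_INR => eps1_eta eta_n k_le.
have := Rmult_le_compat_r _ _ _ (pos_INR n) (Rlt_le _ _ eps1_eta).
by rewrite /=; lra.
Qed.

Lemma discrete_of_ABST (V : finType) (E : rel V) (A B S T : {set V}) (n k M : nat)
    (tau eta1 eps1 eps : R) :
  ABST_conditions E A B S T n tau eta1 eps1 eps ->
  (Rpower eps (1 / 3) <= eps1)%R -> (eps1 * Rn n <= Rn k)%R ->
  (Rn M <= eta1 * Rn n)%R -> (eta1 <= tau)%R -> 4 * k + 60 <= M ->
  exists ExA ExB ExS ExT, discrete_ABST E A B S T ExA ExB ExS ExT k M.
Proof.
move=> [[partABST _] [sA [sB [sS sT]]] _ [[bA bB] [bS bT]] [xA xB xS xT]] e13 eps1k M_eta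
  eta_tau slack.
have n0 : (0 <= Rn n)%R := pos_INR n.
have e13k : (Rpower eps (1 / 3) * Rn n <= Rn k)%R.
  by have := Rmult_le_compat_r _ _ _ n0 e13; lra.
have M_tau : (Rn M <= tau * Rn n)%R by have := Rmult_le_compat_r _ _ _ n0 eta_tau; lra.
have [cAS cBS cAT cBT] := card_partsU partABST.
case: xA => ExA [_ [cExA typA]]; case: xB => ExB [_ [cExB typB]].
case: xS => ExS [_ [cExS typS]]; case: xT => ExT [_ [cExT typT]].
exists ExA, ExB, ExS, ExT; constructor => //.
- exact: leq_of_Rn cExA eps1k.
- exact: leq_of_Rn cExB eps1k.
- exact: leq_of_Rn cExS eps1k.
- exact: leq_of_Rn cExT eps1k.
- exact: leq_of_Rn M_tau sA.
- exact: leq_of_Rn M_tau sB.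
- exact: leq_of_Rn M_tau sS.
- exact: leq_of_Rn M_tau sT.
- by move=> y /bA[_]; exact: leq_of_Rn M_eta.
- by move=> y /bB[_]; exact: leq_of_Rn M_eta.
- by move=> y /bS[_]; exact: leq_of_Rn M_eta.
- by move=> y /bT[_]; exact: leq_of_Rn M_eta.
- move=> v vA vx [|]; have [out_v in_v] := typA v vA vx.
    exact: (non_nbrs_of_Rn (b := true) out_v e13k).
  exact: (non_nbrs_of_Rn (b := false) in_v e13k).
- move=> v vB vx [|]; have [out_v in_v] := typB v vB vx.
    exact: (non_nbrs_of_Rn (b := true) out_v e13k).
  exact: (non_nbrs_of_Rn (b := false) in_v e13k).
- move=> v vS vx; have [out_v in_v] := typS v vS vx.
  rewrite Rn_addn -cBS in out_v; rewrite Rn_addn -cAS in in_v.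
  by split; [exact: (non_nbrs_of_Rn (b := true) out_v e13k)
            | exact: (non_nbrs_of_Rn (b := false) in_v e13k)].
- move=> v vT vx; have [out_v in_v] := typT v vT vx.
  rewrite Rn_addn -cAT in out_v; rewrite Rn_addn -cBT in in_v.
  by split; [exact: (non_nbrs_of_Rn (b := true) out_v e13k)
            | exact: (non_nbrs_of_Rn (b := false) in_v e13k)].
Qed.

Theorem proposition7p3 :
  exists tau0 : R, (0 < tau0)%R /\ forall tau : R, (0 < tau < tau0)%R ->
  exists eta0 : R, (0 < eta0)%R /\ forall eta1 : R, (0 < eta1 < eta0)%R ->
  exists e10 : R, (0 < e10)%R /\ forall eps1 : R, (0 < eps1 < e10)%R ->
  exists e0 : R, (0 < e0)%R /\ forall eps : R, (0 < eps < e0)%R ->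
  exists N : nat, forall n : nat, (N <= n)%N ->
  forall (V : finType) (E : rel V) (A B S T : {set V}),
    #|V| = n ->
    loopless E ->
    min_semideg_half E n ->
    ABST_conditions E A B S T n tau eta1 eps1 eps ->
  forall (L1 L2 : 8.-tuple bool) (ab1 ab2 : bool),
  exists (f1 f2 : 'I_9 -> V),
    [/\ is_copy E L1 f1, is_copy E L2 f2,
        (forall i j : 'I_9, f1 i != f2 j),
        is_useful A B S T f1 /\ is_useful A B S T f2 &
        is_XY_path f1 (pickXY ab1 A B).1 (pickXY ab1 A B).2 /\
        is_XY_path f2 (pickXY ab2 A B).1 (pickXY ab2 A B).2].
Proof.
exists 1%R; split; first lra; move=> tau [tau0 _].
exists tau; split=> // eta1 [eta0 eta_tau].
exists (eta1 / 8)%R; split; first lra; move=> eps1 [eps1_0 eps1_eta].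
exists (eps1 * eps1 * eps1)%R; split; first by apply: Rmult_lt_0_compat => //; nra.
move=> eps eps_cube.
have [N [N_ge _]] := nat_ceiling (Rlt_le _ _ (Rdiv_lt_0_compat 200 eta1 ltac:(lra) eta0)).
exists N => n Nn V E A B S T cardV loopE semideg ABST L1 L2 ab1 ab2.
have eta_n := eta_n_large eta0 N_ge Nn.
have [k [eps1k k_le]] := nat_ceiling (Rmult_le_pos _ _ (Rlt_le _ _ eps1_0) (pos_INR n)).
have [ExA [ExB [ExS [ExT D]]]] := discrete_of_ABST ABST
  (Rlt_le _ _ (Rpower_third_lt eps1_0 eps_cube)) eps1k (slack_le_eta_n eps1_eta eta_n k_le)
  (Rlt_le _ _ eta_tau) (leqnn _).
have [s1 [us1 ps1 ws1 path2]] :=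
  two_disjoint_useful_paths L1 L2 ab1 ab2 loopE (fun x => (semideg x).1) cardV D.
exact: disjoint_useful_copies (dA_part D) us1 ps1 ws1 path2.
Qed.
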